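(* Fix $y_0\in Y$ and suppose an optimal solution $(\bar\psi,\bar\eta)$ of the dual problem exists. Let $(y(\cdot),u(\cdot))$ be an admissible process on $\{0,1,\dots\}$ with $y(0)=y_0$, and suppose that for all $t=0,1,\dots$: $$k(y(t),u(t))-\bar\psi(y(t))+\bar\eta(f(y(t),u(t)))-\bar\eta(y(t))=V(y_0)-\bar\psi(y_0),\qquad\bar\psi(y(t))=\bar\psi(y_0).$$ Then $u(\cdot)$ is optimal in the long-run average problem, i.e. $$\liminf_{T\to\infty}\frac1T\sum_{t=0}^{T-1}k(y(t),u(t))=\inf_{u'\in\mathcal U(y_0)}\liminf_{T\to\infty}\frac1T\sum_{t=0}^{T-1}k(y'(t),u'(t)),$$ where $y'$ denotes the trajectory generated by $u'$.
   Context: Let $Y\subset\mathbb{R}^m$ be nonempty compact, $U_0$ a compact metric space, $U(\cdot):Y\rightsquigarrow U_0$ upper semicontinuous and compact-valued, and $f:\mathbb{R}^m\times U_0\to\mathbb{R}^m$, $k:\mathbb{R}^m\times U_0\to\mathbb{R}$ continuous. Put $A(y):=\{u\in U(y): f(y,u)\in Y\}$ and $G:=\{(y,u):y\in Y,\ u\in A(y)\}$. Standing assumption: $A(y)\ne\emptyset$ for all $y\in Y$. An admissible process from $y_0$ on $\{0,\dots,T-1\}$ (respectively on $\{0,1,\dots\}$) is a pair $(y(t),u(t))$ with $y(0)=y_0$, $u(t)\in A(y(t))$ and $y(t+1)=f(y(t),u(t))$. The controls form $\mathcal U_T(y_0)$ (respectively $\mathcal U(y_0)$). Define $V_T(y_0):=\frac1T\min_{u\in\mathcal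 U_T(y_0)}\sum_{t=0}^{T-1}k(y(t),u(t))$. Standing assumption of this result: for every $y\in Y$ the limit $V(y):=\lim_{T\to\infty}V_T(y)$ exists, and $V$ is continuous on $Y$. Dual problem: $d^*(y_0):=\sup\mu$, where the supremum is over triples $(\mu,\psi,\eta)\in\mathbb{R}\times C(Y)\times C(Y)$ with, for all $(y,u)\in G$: $$k(y,u)+\psi(y_0)-\psi(y)+\eta(f(y,u))-\eta(y)-\mu\ge0,\qquad\psi(f(y,u))-\psi(y)\ge0.$$ An optimal solution of the dual problem is a pair $(\bar\psi,\bar\eta)\in C(Y)\times C(Y)$ with, for all $(y,u)\in G$: $$k(y,u)+\bar\psi(y_0)-\bar\psi(y)+\bar\eta(f(y,u))-\bar\eta(y)\ge d^*(y_0),\qquad\bar\psi(f(y,u))-\bar\psi(y)\ge0.$$ *)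

From HB Require Import structures.
From mathcomp Require Import all_boot all_order all_algebra.
From mathcomp Require Import all_classical all_reals all_analysis.
Set Implicit Arguments. Unset Strict Implicit. Unset Printing Implicit Defensive.
Import Order.TTheory GRing.Theory Num.Theory.
Import numFieldNormedType.Exports.
Local Open Scope classical_set_scope.
Local Open Scope ring_scope.

Section Defs.
Variables (R : realType) (m : nat) (U0 : pseudoMetricType R).
Local Notation X := 'rV[R]_m.

Definition usc_on (Y : set X) (U : X -> set U0) : Prop :=
  forall y, Y y -> forall O : set U0, open O -> U y `<=` O ->
    exists2 N : set X, nbhs y N & forall y', N y' -> Y y' -> U y' `<=` O.

Definition Aset (Y : set X) (U : X -> set U0) (f : X -> U0 -> X) (y : X) : set U0 :=
  [set u | U y u /\ Y (f y u)].

Definition Gset (Y : set X) (U : X -> set U0) (f : X -> U0 -> X) : set (X * U0) :=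
  [set p | Y p.1 /\ Aset Y U f p.1 p.2].

Fixpoint traj (f : X -> U0 -> X) (y0 : X) (u : nat -> U0) (t : nat) : X :=
  match t with
  | 0 => y0
  | t'.+1 => f (traj f y0 u t') (u t')
  end.

Definition UT (Y : set X) (U : X -> set U0) (f : X -> U0 -> X) (T : nat) (y0 : X)
  : set (nat -> U0) :=
  [set u | forall t, (t < T)%N -> Aset Y U f (traj f y0 u t) (u t)].

Definition Uinf (Y : set X) (U : X -> set U0) (f : X -> U0 -> X) (y0 : X)
  : set (nat -> U0) :=
  [set u | forall t, Aset Y U f (traj f y0 u t) (u t)].

Definition avg_cost (f : X -> U0 -> X) (k : X -> U0 -> R) (y0 : X) (u : nat -> U0)
  (T : nat) : R :=
  (\sum_(t < T) k (traj f y0 u t) (u t)) / T%:R.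

(* V_T(y0) = (1/T) min_{u in U_T(y0)} sum_{t<T} k  (min written as inf) *)
Definition VT (Y : set X) (U : X -> set U0) (f : X -> U0 -> X) (k : X -> U0 -> R)
  (T : nat) (y0 : X) : R :=
  inf [set \sum_(t < T) k (traj f y0 u t) (u t) | u in UT Y U f T y0] / T%:R.

Definition dual_feasible (Y : set X) (U : X -> set U0) (f : X -> U0 -> X)
  (k : X -> U0 -> R) (y0 : X) (mu : R) (psi eta : X -> R) : Prop :=
  {within Y, continuous psi} /\ {within Y, continuous eta} /\
  forall y u, Gset Y U f (y, u) ->
    0 <= k y u + psi y0 - psi y + eta (f y u) - eta y - mu /\
    0 <= psi (f y u) - psi y.

Definition dstar (Y : set X) (U : X -> set U0) (f : X -> U0 -> X)
  (k : X -> U0 -> R) (y0 : X) : \bar R :=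
  ereal_sup [set mu%:E | mu in
     [set mu | exists psi eta, dual_feasible Y U f k y0 mu psi eta]].

Definition dual_optimal (Y : set X) (U : X -> set U0) (f : X -> U0 -> X)
  (k : X -> U0 -> R) (y0 : X) (psi eta : X -> R) : Prop :=
  {within Y, continuous psi} /\ {within Y, continuous eta} /\
  forall y u, Gset Y U f (y, u) ->
    (dstar Y U f k y0 <= (k y u + psi y0 - psi y + eta (f y u) - eta y)%:E)%E /\
    0 <= psi (f y u) - psi y.

End Defs.

From HB Require Import structures.
From mathcomp Require Import all_boot all_order all_algebra.
From mathcomp Require Import all_classical all_reals all_analysis.
From mathcomp Require Import ring.
Import Order.TTheory GRing.Theory Num.Theory.
Import numFieldNormedType.Exports.
Local Open Scope classical_set_scope.
Local Open Scope ring_scope.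

(* Along the given process [psib] is constant, so the hypothesis says that
   [k(y t, u t) = V y0 + etab (y t) - etab (y (t+1))]: the cost telescopes and,
   [etab] being bounded on the compact set [Y], its averages tend to [V y0].
   Conversely, the first [T] steps of any admissible control are admissible on
   [{0, ..., T-1}], so its average cost dominates [V_T y0], whose limit is
   [V y0]. Hence [V y0] is both attained by [u] and a lower bound. *)

Set Implicit Arguments.
Unset Strict Implicit.

Section Limits.
Variable R : realType.

Lemma continuous_compact_bounded (T : topologicalType) (A : set T) (g : T -> R) :
  compact A -> {within A, continuous g} ->
  exists M : R, forall x, A x -> `|g x| <= M.
Proof.
move=> cA cg; have [M [_ HM]] := compact_bounded (continuous_compact cg cA).
by exists (M + 1) => x Ax; apply: (HM (M + 1)); [rewrite ltrDl | exists x].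
Qed.

Lemma le_limn_einf (a b : (\bar R)^nat) :
  (forall n, (a n <= b n)%E) -> (limn_einf a <= limn_einf b)%E.
Proof.
move=> ab; rewrite !limn_einf_lim.
apply: lee_lim; [exact: is_cvg_einfs | exact: is_cvg_einfs |].
apply: nearW => n; apply: le_ereal_inf_tmp => _ [j /= nj <-].
by apply: le_trans (ab j); apply: ereal_inf_lbound; exists j.
Qed.

Lemma cvg_limn_einf_EFin (a : R^nat) (l : R) :
  a @ \oo --> l -> limn_einf (fun n => (a n)%:E) = l%:E.
Proof.
move=> al; apply: (cvg_limn_einf_sup _).1.
by apply/fine_cvgP; split; [exact: nearW | exact: al].
Qed.

Lemma cvg_bounded_divn (e : R^nat) (M : R) :
  (forall n, `|e n| <= M) -> e n / n%:R @[n --> \oo] --> 0.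
Proof.
move=> eM; apply/cvgrPdist_le => eps eps0.
have M0 : 0 <= M by apply: le_trans (eM 0%N).
near=> n.
have n_gt : M / eps < n%:R.
  near: n; exists (Num.truncn (M / eps)).+1 => // n /= Hn.
  by apply: lt_le_trans (truncnS_gt _) _; rewrite ler_nat.
have n0 : 0 < n%:R :> R by apply: le_lt_trans n_gt; rewrite divr_ge0 // ltW.
rewrite sub0r normrN normrM normfV (gtr0_norm n0) ler_pdivrMr //.
rewrite ltr_pdivrMr // in n_gt.
by apply: le_trans (eM n) _; rewrite mulrC ltW.
Unshelve. all: by end_near.
Qed.

Lemma cvg_telescoping_mean (a e : R^nat) (c M : R) :
  (forall t, a t = c + e t - e t.+1) -> (forall t, `|e t| <= M) ->
  (\sum_(t < T) a t) / T%:R @[T --> \oo] --> c.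
Proof.
move=> ae eM.
have sumE T : \sum_(t < T) a t = T%:R * c + (e 0%N - e T).
  elim: T => [|T IH]; first by rewrite big_ord0 mul0r subrr addr0.
  by rewrite big_ord_recr /= IH ae -natr1; ring.
have e0T T : `|e 0%N - e T| <= M + M by apply: le_trans (ler_normB _ _) (lerD _ _).
rewrite -[c]addr0; apply: cvg_trans (cvgD (cvg_cst c) (cvg_bounded_divn e0T)).
apply: near_eq_cvg; near=> T; rewrite sumE mulrDl mulrAC divff ?mul1r //.
by rewrite pnatr_eq0 -lt0n; near: T; exists 1%N.
Unshelve. all: by end_near.
Qed.

End Limits.

Section Admissible.
Variables (R : realType) (m : nat) (U0 : pseudoMetricType R).
Local Notation X := 'rV[R]_m.
Variables (Y : set X) (U : X -> set U0) (f : X -> U0 -> X) (y0 : X).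
Hypothesis Yy0 : Y y0.

Lemma Uinf_traj_in (u : nat -> U0) :
  Uinf Y U f y0 u -> forall t, Y (traj f y0 u t).
Proof. by move=> Hu [|t] //=; have [] := Hu t. Qed.

Lemma UT_traj_in (T : nat) (u : nat -> U0) :
  UT Y U f T y0 u -> forall t, (t <= T)%N -> Y (traj f y0 u t).
Proof. by move=> Hu [|t] //= tT; have [] := Hu t tT. Qed.

Lemma Uinf_sub_UT (T : nat) : Uinf Y U f y0 `<=` UT Y U f T y0.
Proof. by move=> u Hu t _; apply: Hu. Qed.

Variables (k : X -> U0 -> R) (M : R).
Hypothesis k_ge : forall y v, Y y -> M <= k y v.

Lemma VT_le_avg_cost (T : nat) (u : nat -> U0) :
  UT Y U f T y0 u -> VT Y U f k T y0 <= avg_cost f k y0 u T.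
Proof.
move=> Hu; apply: ler_wpM2r; first by rewrite invr_ge0.
apply: ge_inf; last by exists u.
exists (\sum_(t < T) M) => _ [w Hw <-]; apply: ler_sum => t _.
by apply: k_ge; apply: (UT_traj_in Hw); apply: ltnW.
Qed.

Lemma limn_VT_le_limn_einf_avg_cost (l : R) (u : nat -> U0) :
  VT Y U f k T y0 @[T --> \oo] --> l -> Uinf Y U f y0 u ->
  (l%:E <= limn_einf (fun T => (avg_cost f k y0 u T)%:E))%E.
Proof.
move=> /cvg_limn_einf_EFin <- Hu; apply: le_limn_einf => T.
by rewrite lee_fin; apply/VT_le_avg_cost/Uinf_sub_UT.
Qed.

End Admissible.

Unset Implicit Arguments.

Theorem proposition4p5 (R : realType) (m : nat) (U0 : pseudoMetricType R)
  (Y : set 'rV[R]_m) (U : 'rV[R]_m -> set U0)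
  (f : 'rV[R]_m -> U0 -> 'rV[R]_m) (k : 'rV[R]_m -> U0 -> R)
  (V : 'rV[R]_m -> R) (y0 : 'rV[R]_m) (psib etab : 'rV[R]_m -> R)
  (u : nat -> U0) :
  Y !=set0 -> compact Y ->
  hausdorff_space U0 -> compact [set: U0] ->
  usc_on Y U -> (forall y, Y y -> compact (U y)) ->
  continuous (fun p : 'rV[R]_m * U0 => f p.1 p.2) ->
  continuous (fun p : 'rV[R]_m * U0 => k p.1 p.2) ->
  (forall y, Y y -> Aset Y U f y !=set0) ->
  (forall y, Y y -> VT Y U f k n y @[n --> \oo] --> V y) ->
  {within Y, continuous V} ->
  Y y0 ->
  dual_optimal Y U f k y0 psib etab ->
  u \in Uinf Y U f y0 ->
  (forall t, k (traj f y0 u t) (u t) - psib (traj f y0 u t)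
               + etab (f (traj f y0 u t) (u t)) - etab (traj f y0 u t)
             = V y0 - psib y0) ->
  (forall t, psib (traj f y0 u t) = psib y0) ->
  limn_einf (fun T => (avg_cost f k y0 u T)%:E)
  = ereal_inf [set limn_einf (fun T => (avg_cost f k y0 u' T)%:E)
               | u' in Uinf Y U f y0].
Proof.
move=> _ cY _ cU0 _ _ _ ck _ VTcvg _ Yy0 [_ [ceta _]] /set_mem Hu Hk Hpsi.
have [M kM] := continuous_compact_bounded (compact_setX cY cU0)
  (continuous_subspaceT ck).
have k_ge y v : Y y -> - M <= k y v.
  by move=> Yy; have := kM (y, v) (conj Yy I); rewrite ler_norml => /andP[].
have [E etaE] := continuous_compact_bounded cY ceta.
have avg_cvg : avg_cost f k y0 u T @[T --> \oo] --> V y0.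
  apply: (cvg_telescoping_mean (a := fun t => k (traj f y0 u t) (u t))
    (e := fun t => etab (traj f y0 u t)) (M := E)).
  - move=> t /=; have := Hk t; rewrite Hpsi => Hkt.
    by rewrite -[V y0](subrK (psib y0)) -Hkt; ring.
  - by move=> t; apply/etaE/(Uinf_traj_in Yy0 Hu).
rewrite (cvg_limn_einf_EFin avg_cvg); apply/eqP; rewrite eq_le; apply/andP; split.
- apply: le_ereal_inf_tmp => _ [w Hw <-].
  exact: (limn_VT_le_limn_einf_avg_cost Yy0 k_ge (VTcvg _ Yy0) Hw).
- by apply: ereal_inf_lbound; exists u => //; apply: cvg_limn_einf_EFin.
Qed.
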